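(* For every digraph $X$, $U_{X^{\mathrm{op}}}=U_X$.
   Context: A digraph $X=(V,E)$: $V$ finite, $E\subset\{(u,v)\in V\times V\mid u\ne v\}$; $X^{\mathrm{op}}=(V,\{(v,u)\mid(u,v)\in E\})$. $n=|V|$, $\Sigma_V$ is the set of bijections $\sigma:[n]\to V$, $X\mathrm{Des}(\sigma)=\{i\in[n-1]\mid(\sigma_i,\sigma_{i+1})\in E\}$. $F_I=\sum x_{i_1}\cdots x_{i_n}$ over $1\le i_1\le\cdots\le i_n$ with $i_j<i_{j+1}$ for all $j\in I$. The Redei–Berge symmetric function is $U_X=\sum_{\sigma\in\Sigma_V}F_{X\mathrm{Des}(\sigma)}$. *)

From mathcomp Require Import all_boot.
Set Implicit Arguments. Unset Strict Implicit. Unset Printing Implicit Defensive.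

(* A digraph on a finite vertex type V is an edge relation E : rel V,
   (u,v) in E iff E u v; loops are excluded by the hypothesis irreflexive E. *)

Definition op_rel (V : Type) (E : rel V) : rel V := fun u v => E v u.

(* Sigma_V : bijections sigma : [n] -> V, n = #|V|, with positions
   represented 0-based by 'I_n (sigma_i of the paper is sigma (i-1)).
   Since #|'I_n| = #|V|, injectivity is the same as bijectivity. *)

(* X-descent set of sigma, as a predicate on 1-based positions i in [n-1]:
   i is a descent iff (sigma_i, sigma_{i+1}) in E. *)
Definition XDes (V : finType) (E : rel V) (n : nat) (sigma : 'I_n -> V) : pred nat :=
  fun i => [exists j : 'I_n, exists k : 'I_n,
              [&& j.+1 == i, k == i :> nat & E (sigma j) (sigma k)]].

(* Formal power series in the variables x_0, x_1, x_2, ... with nat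
   coefficients, given by their coefficient function on monomials.
   A monomial x_{i_1} ... x_{i_d} is encoded by the weakly increasing
   sequence [:: i_1; ...; i_d] of its variable indices; unsorted sequences
   do not encode monomials and get coefficient 0. *)
Definition series := seq nat -> nat.

Definition F (n : nat) (I : pred nat) : series :=
  fun m => nat_of_bool
    [&& size m == n, sorted leq m &
        all (fun j => (j \in I) ==> (nth 0 m j.-1 < nth 0 m j)) (iota 1 n.-1)].

Definition U (V : finType) (E : rel V) : series :=
  fun m => \sum_(sigma : {ffun 'I_#|V| -> V} | injectiveb sigma)
              F #|V| (XDes E sigma) m.

From mathcomp Require Import all_boot.
From mathcomp Require Import zify.
Set Implicit Arguments. Unset Strict Implicit. Unset Printing Implicit Defensive.

(* Fix a weakly increasing monomial m = x_{m_0} ... x_{m_{n-1}}.  The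
   coefficient of m in F_{XDes(sigma)} is 1 exactly when no X-descent of sigma
   sits between two equal letters of m.  Reversing sigma inside each maximal
   block of equal letters of m turns such X-descents into X^op-descents and
   keeps the positions with m_i < m_{i+1} fixed; this involution on Sigma_V
   matches the terms of U_X and U_{X^op} at m one by one. *)

Lemma ltn_count_sorted (p : pred nat) (m : seq nat) :
  sorted leq m -> (forall x y, x <= y -> p y -> p x) ->
  forall k, k < size m -> (k < count p m) = p (nth 0 m k).
Proof.
move=> + p_down; elim: m => [|x s IHs] //= sorted_xs k lt_k.
have sorted_s : sorted leq s by move: sorted_xs; case: s {IHs lt_k} => //= y s /andP[].
have x_min : all (leq x) s by apply: (order_path_min leq_trans).
case px: (p x) => /=.
  by case: k lt_k => [|k] //= lt_k; rewrite ltnS IHs.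
have -> : count p s = 0.
  apply/eqP; rewrite -leqn0 leqNgt -has_count; apply/hasPn => y y_s.
  by apply/negP => /(p_down _ _ (allP x_min _ y_s)); rewrite px.
rewrite ltn0; case: k lt_k => [|k] lt_k /=; first by rewrite px.
apply/esym/negbTE/negP => /(p_down x) p_x.
by move: px; rewrite p_x //; apply/(allP x_min)/mem_nth.
Qed.

Section BlockReversal.
Variable m : seq nat.
Hypothesis m_sorted : sorted leq m.

(* The block of letters equal to m_j occupies the positions [block_lo j, block_hi j). *)
Definition block_lo j := count (fun x => x < nth 0 m j) m.
Definition block_hi j := count (fun x => x <= nth 0 m j) m.
Definition block_rev j := block_lo j + block_hi j - 1 - j.

Lemma block_lo_le j : j < size m -> block_lo j <= j.
Proof.
move=> lt_j; rewrite leqNgt /block_lo ltn_count_sorted //= ?ltnn //.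
by move=> x y /leq_ltn_trans; apply.
Qed.

Lemma block_hi_gt j : j < size m -> j < block_hi j.
Proof. by move=> lt_j; rewrite /block_hi ltn_count_sorted //= => x y /leq_trans; apply. Qed.

Lemma block_rev_lt j : j < size m -> block_rev j < size m.
Proof.
move=> lt_j; have := block_lo_le lt_j; have := block_hi_gt lt_j.
have := count_size (fun x => x <= nth 0 m j) m; rewrite /block_rev -/(block_hi j); lia.
Qed.

Lemma nth_block_rev j : j < size m -> nth 0 m (block_rev j) = nth 0 m j.
Proof.
move=> lt_j; have le_lo := block_lo_le lt_j; have gt_hi := block_hi_gt lt_j.
have lt_rev := block_rev_lt lt_j.
have below_hi : block_rev j < block_hi j by rewrite /block_rev; lia.
have above_lo : ~~ (block_rev j < block_lo j) by rewrite -leqNgt /block_rev; lia.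
rewrite /block_hi ltn_count_sorted //= in below_hi; last by move=> x y /leq_trans; apply.
rewrite /block_lo ltn_count_sorted //= in above_lo; last by move=> x y /leq_ltn_trans; apply.
by apply/eqP; rewrite eqn_leq below_hi leqNgt.
Qed.

Lemma block_revK j : j < size m -> block_rev (block_rev j) = j.
Proof.
move=> lt_j; have := block_lo_le lt_j; have := block_hi_gt lt_j.
rewrite {1}/block_rev /block_lo /block_hi nth_block_rev //.
rewrite -/(block_lo j) -/(block_hi j) /block_rev; lia.
Qed.

Lemma block_rev_succ j : j.+1 < size m -> nth 0 m j = nth 0 m j.+1 ->
  block_rev j = (block_rev j.+1).+1.
Proof.
move=> lt_j1 eq_mj; have := block_lo_le (ltnW lt_j1); have := block_hi_gt lt_j1.
rewrite /block_rev /block_lo /block_hi eq_mj -/(block_lo j.+1) -/(block_hi j.+1); lia.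
Qed.

End BlockReversal.

Definition compatible (V : Type) (E : rel V) (m : seq nat) n (s : 'I_n -> V) :=
  [forall j : 'I_n, forall k : 'I_n,
     [&& k == j.+1 :> nat & E (s j) (s k)] ==> (nth 0 m j < nth 0 m k)].

Lemma eq_compatible (V : Type) (E : rel V) m n (s s' : 'I_n -> V) :
  s =1 s' -> compatible E m s = compatible E m s'.
Proof. by move=> eq_s; apply: eq_forallb => j; apply: eq_forallb => k; rewrite !eq_s. Qed.

Lemma F_XDes (V : finType) (E : rel V) n (s : 'I_n -> V) m :
  sorted leq m -> size m = n -> F n (XDes E s) m = compatible E m s.
Proof.
move=> m_sorted m_size; rewrite /F m_size eqxx m_sorted /=; congr nat_of_bool.
apply/allP/forallP => [desc_ok j | compat i _].
  apply/forallP => k; apply/implyP => /andP[/eqP k_succ E_jk].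
  have : (k : nat) \in iota 1 n.-1 by rewrite mem_iota; have := ltn_ord k; lia.
  move=> /desc_ok /implyP; rewrite k_succ; apply.
  by apply/existsP; exists j; apply/existsP; exists k; rewrite k_succ !eqxx.
apply/implyP => /existsP[j /existsP[k /and3P[/eqP j_succ /eqP k_i E_jk]]].
have /forallP/(_ k)/implyP := compat j.
by rewrite k_i -j_succ eqxx E_jk; apply.
Qed.

Section Reversal.
Variables (V : finType) (n : nat) (m : seq nat).
Hypotheses (m_size : size m = n) (m_sorted : sorted leq m).

Lemma block_rev_ord_lt (j : 'I_n) : block_rev m j < n.
Proof. by have := block_rev_lt m_sorted; rewrite m_size; apply. Qed.

Definition block_rev_ord (j : 'I_n) : 'I_n := Ordinal (block_rev_ord_lt j).

Lemma block_rev_ordK : involutive block_rev_ord.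
Proof. by move=> j; apply: val_inj; rewrite /= block_revK // m_size. Qed.

Lemma compatible_block_rev (E : rel V) (s : 'I_n -> V) :
  compatible E m s -> compatible (op_rel E) m (s \o block_rev_ord).
Proof.
move=> compat; apply/forallP => j; apply/forallP => k.
apply/implyP => /andP[/eqP k_succ E_jk].
have le_m : nth 0 m j <= nth 0 m k.
  by apply: (sorted_leq_nth leq_trans leqnn) => //=; rewrite ?inE ?m_size //; lia.
rewrite ltn_neqAle le_m andbT; apply/negP => /eqP eq_m.
have rev_succ : block_rev m j = (block_rev m k).+1.
  by rewrite k_succ block_rev_succ // ?m_size -?k_succ.
have /forallP/(_ (block_rev_ord k))/forallP/(_ (block_rev_ord j))/implyP := compat.
move: E_jk; rewrite /op_rel /= !nth_block_rev ?m_size // eq_m ltnn rev_succ eqxx.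
by move=> -> /(_ isT).
Qed.

Lemma compatible_block_revE (E : rel V) (s : 'I_n -> V) :
  compatible (op_rel E) m (s \o block_rev_ord) = compatible E m s.
Proof.
apply/idP/idP => [/(@compatible_block_rev (op_rel E))|/compatible_block_rev //].
by apply: contraTT; rewrite (@eq_compatible _ _ _ _ _ s) // => j /=; rewrite block_rev_ordK.
Qed.

End Reversal.

Theorem mainTheorem10 (V : finType) (E : rel V) (hE : irreflexive E) :
  U (op_rel E) =1 U E.
Proof.
move=> m; rewrite /U.
case: (boolP (sorted leq m && (size m == #|V|)))
  => [/andP[m_sorted /eqP m_size] | not_monomial]; last first.
  have F0 I : F #|V| I m = 0.
    by rewrite /F; case/nandP: not_monomial => /negbTE ->; rewrite ?andbF.
  by rewrite !big1 // => s _; apply: F0.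
pose rev := block_rev_ord m_size m_sorted.
pose rev_fun (s : {ffun 'I_#|V| -> V}) := [ffun i => s (rev i)].
have rev_funK : involutive rev_fun.
  by move=> s; apply/ffunP => i; rewrite !ffunE /rev block_rev_ordK.
have inj_rev_fun (s : {ffun 'I_#|V| -> V}) : injectiveb s -> injectiveb (rev_fun s).
  move=> /injectiveP inj_s; apply/injectiveP => i j; rewrite !ffunE => /inj_s.
  by move/(congr1 rev); rewrite /rev !block_rev_ordK.
rewrite (reindex_inj (inv_inj rev_funK)); apply: eq_big => s.
  by apply/idP/idP => [/inj_rev_fun|/inj_rev_fun //]; rewrite rev_funK.
move=> _; rewrite !F_XDes // -(compatible_block_revE m_size m_sorted E s).
by rewrite (@eq_compatible _ _ _ _ (rev_fun s) (s \o rev)) // => i; rewrite ffunE.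
Qed.
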